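(* For $n\ge 1$, $i\ge 1$, $j\ge 0$, the number of plane trees with $n$ edges, exactly $i$ old leaves and exactly $j$ young leaves is $$\frac{1}{n}\binom{n}{i}\binom{n-i}{j}\binom{n-i-j}{i-1}.$$
   Context: A plane tree is a rooted tree in which the children of each vertex are linearly ordered (left to right). A leaf is a vertex with no children; by convention the tree consisting of a single vertex (no edges) has no leaves. A leaf is an old leaf if it is the leftmost child of its parent, and a young leaf otherwise. *)

From mathcomp Require Import all_boot.
From Stdlib Require List.
Set Implicit Arguments. Unset Strict Implicit. Unset Printing Implicit Defensive.

Inductive ptree : Type := Node : seq ptree -> ptree.

Fixpoint edges (t : ptree) : nat :=
  match t with Node l => sumn (map (fun c => (edges c).+1) l) end.

(* a vertex is a leaf when it has no children (only used for non-root vertices) *)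
Definition is_leaf (t : ptree) : bool :=
  match t with Node l => nilp l end.

(* Old leaves: leaves that are the leftmost child of their parent.
   The root is never counted (single-vertex tree has no leaves). *)
Fixpoint old_leaves (t : ptree) : nat :=
  match t with
  | Node l =>
      (match l with c :: _ => is_leaf c | [::] => false end)
      + sumn (map old_leaves l)
  end.

Fixpoint young_leaves (t : ptree) : nat :=
  match t with
  | Node l =>
      (match l with _ :: r => count is_leaf r | [::] => 0 end)
      + sumn (map young_leaves l)
  end.

From mathcomp Require Import all_boot zify.
From Stdlib Require List.
Set Implicit Arguments. Unset Strict Implicit. Unset Printing Implicit Defensive.

(* A plane tree with at least one edge is either the tree with one edge (letter 0),
   a new root above such a tree (1), or such a tree whose root gets a new rightmost
   child that is a leaf (2) or the root of another such tree (3).  Writing this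
   decomposition in prefix order codes the trees with n edges bijectively by words
   of length n over {0,1,2,3}, and the letters 0 and 2 mark exactly the old and
   the young leaves.  With arities 0, 1, 1, 2 the codes are the Lukasiewicz words,
   so they contain one more 0 than 3.  By the cycle lemma each word of arity sum
   n - 1 has exactly one rotation that is a code, hence n times the number of
   trees with i old and j young leaves is the number of words of length n with
   i zeros, j twos and i - 1 threes, a multinomial coefficient that factors as
   C(n, i) C(n - i, j) C(n - i - j, i - 1). *)

(** * Coding plane trees by words *)

Definition leaf : ptree := Node [::].

Lemma edges_rcons l t : edges (Node (rcons l t)) = edges (Node l) + (edges t).+1.
Proof. by rewrite /= map_rcons sumn_rcons. Qed.

Lemma old_leaves_rcons l t : 0 < size l ->
  old_leaves (Node (rcons l t)) = old_leaves (Node l) + old_leaves t.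
Proof. by case: l => [|c l] //= _; rewrite map_rcons sumn_rcons !addnA. Qed.

Lemma young_leaves_rcons l t : 0 < size l ->
  young_leaves (Node (rcons l t)) = young_leaves (Node l) + is_leaf t + young_leaves t.
Proof.
by case: l => [|c l] //= _; rewrite map_rcons sumn_rcons -cats1 count_cat /=; lia.
Qed.

(* A word is decoded from right to left on a stack of trees; a letter of arity k
   pops k trees and pushes one.  On stacks that are too short [step] returns junk,
   which [lukas] excludes. *)
Definition step (a : nat) (s : seq ptree) : seq ptree :=
  match a, s with
  | 0, _ => Node [:: leaf] :: s
  | 1, t :: s' => Node [:: t] :: s'
  | 2, Node l :: s' => Node (rcons l leaf) :: s'
  | 3, Node l :: t :: s' => Node (rcons l t) :: s'
  | _, _ => s
  end.

Fixpoint decode (w : seq nat) : seq ptree :=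
  if w is a :: r then step a (decode r) else [::].

Definition arity (a : nat) : nat := match a with 0 => 0 | 1 | 2 => 1 | _ => 2 end.

(* [lukas k w]: [w] is the concatenation of the codes of [k] trees. *)
Fixpoint lukas (k : nat) (w : seq nat) : bool :=
  if w is a :: r then [&& a < 4, 0 < k & lukas (k.-1 + arity a) r] else k == 0.

Lemma lukas_letters k w : lukas k w -> all (fun a => a < 4) w.
Proof. by elim: w k => [|a w IH] k //= /and3P[-> _ /IH]. Qed.

Lemma lukas_cat k m w r : lukas m w -> lukas (m + k) (w ++ r) = lukas k r.
Proof.
elim: w m => [|a w IH] m /=; first by move/eqP->.
case/and3P=> -> m_gt0 /IH <-; rewrite addn_gt0 m_gt0.
by congr lukas; lia.
Qed.

Lemma size_step a s : a < 4 -> arity a <= size s ->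
  size (step a s) = (size s - arity a).+1.
Proof. by case: a => [|[|[|[|]]]] // _; case: s => [|[l] [|t s]] //=; lia. Qed.

Lemma step_cat a s s' : a < 4 -> arity a <= size s ->
  step a (s ++ s') = step a s ++ s'.
Proof. by case: a => [|[|[|[|]]]] // _; case: s => [|[l] [|t s]]. Qed.

Lemma size_decode k w : lukas k w -> size (decode w) = k.
Proof.
elim: w k => [|a w IH] k /=; first by move/eqP.
case/and3P=> a4 k_gt0 /IH size_w.
by rewrite size_step // size_w; lia.
Qed.

Lemma decode_cat k w r : lukas k w -> decode (w ++ r) = decode w ++ decode r.
Proof.
elim: w k => [|a w IH] k //= /and3P[a4 _ lw].
by rewrite (IH _ lw) step_cat // (size_decode lw) leq_addl.
Qed.

Lemma step_stats a s : a < 4 -> arity a <= size s -> ~~ has is_leaf s ->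
  [/\ ~~ has is_leaf (step a s),
      sumn (map edges (step a s)) = (sumn (map edges s)).+1,
      sumn (map old_leaves (step a s)) = (a == 0) + sumn (map old_leaves s) &
      sumn (map young_leaves (step a s)) = (a == 2) + sumn (map young_leaves s)].
Proof.
case: a => [|[|[|[|//]]]] _.
- by move=> _ /= ->.
- case: s => [|t s] //= _ /norP[t_nl s_nl]; rewrite (negbTE t_nl) s_nl.
  by split; lia.
- case: s => [|[l] s] // _; cbn [step map has] => /norP[l_nl s_nl].
  have l_gt0 : 0 < size l by case: l l_nl.
  rewrite edges_rcons (old_leaves_rcons _ l_gt0) (young_leaves_rcons _ l_gt0) /=.
  by rewrite /nilp size_rcons (negbTE s_nl); split; lia.
- case: s => [|[l] [|t s]] // _; cbn [step map has] => /norP[l_nl /norP[t_nl s_nl]].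
  have l_gt0 : 0 < size l by case: l l_nl.
  rewrite edges_rcons (old_leaves_rcons _ l_gt0) (young_leaves_rcons _ l_gt0) /=.
  by rewrite /nilp size_rcons (negbTE t_nl) (negbTE s_nl); split; lia.
Qed.

Lemma decode_stats k w : lukas k w ->
  [/\ ~~ has is_leaf (decode w),
      sumn (map edges (decode w)) = size w,
      sumn (map old_leaves (decode w)) = count_mem 0 w &
      sumn (map young_leaves (decode w)) = count_mem 2 w].
Proof.
elim: w k => [|a w IH] k //= /and3P[a4 _ lw].
have [nl_w edges_w old_w young_w] := IH _ lw.
have := step_stats a4 _ nl_w; rewrite (size_decode lw) leq_addl => /(_ isT).
by rewrite edges_w old_w young_w.
Qed.

Definition head_letter (t : ptree) : nat :=
  match t with
  | Node [:: c] => if is_leaf c then 0 else 1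
  | Node l => if is_leaf (last leaf l) then 2 else 3
  end.

Lemma head_letter_step a s : a < 4 -> arity a <= size s -> ~~ has is_leaf s ->
  head_letter (head leaf (step a s)) = a.
Proof.
case: a => [|[|[|[|//]]]] _ //.
- by case: s => [|t s] //= _ /norP[/negbTE ->].
- by case: s => [|[[|c [|d l]]] s] //= _ _; rewrite ?last_rcons.
- case: s => [|[l] [|t s]] //= _ /norP[l_nl /norP[/negbTE t_nl _]].
  by case: l l_nl => [|c [|d l]] //= _; rewrite ?last_rcons t_nl.
Qed.

Lemma step_inj a b s s' : a < 4 -> b < 4 -> arity a <= size s -> arity b <= size s' ->
  ~~ has is_leaf s -> ~~ has is_leaf s' -> step a s = step b s' -> a = b /\ s = s'.
Proof.
move=> a4 b4 sa sb nl nl' E.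
have ab : a = b by rewrite -(head_letter_step a4 sa nl) E head_letter_step.
split=> //; move: sa sb E {nl nl' b4}; rewrite -{}ab.
case: a a4 => [|[|[|[|//]]]] _; first by move=> _ _ [->].
- by case: s s' => [|t s] [|t' s'] // _ _ [-> ->].
- by case: s s' => [|[l] s] [|[l'] s'] // _ _ [/rcons_inj[->] ->].
- by case: s s' => [|[l] [|t s]] [|[l'] [|t' s']] // _ _ [/rcons_inj[-> ->] ->].
Qed.

Lemma decode_inj k w1 w2 : lukas k w1 -> lukas k w2 -> decode w1 = decode w2 -> w1 = w2.
Proof.
elim: w1 k w2 => [|a w1 IH] k [|b w2] //=; first by move/eqP->; case/and3P.
  by move=> /and3P[_ k_gt0 _] /eqP k0; rewrite k0 in k_gt0.
move=> /and3P[a4 _ l1] /and3P[b4 _ l2] E.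
have [nl1 _ _ _] := decode_stats l1; have [nl2 _ _ _] := decode_stats l2.
have := step_inj a4 b4 _ _ nl1 nl2 E.
rewrite (size_decode l1) (size_decode l2) !leq_addl => /(_ isT isT)[ab Ew].
by rewrite -ab in l2 *; rewrite (IH _ _ l1 l2 Ew).
Qed.

Lemma decode_surj t : 0 < edges t -> exists2 w, lukas 1 w & decode w = [:: t].
Proof.
have [N] := ubnP (edges t); elim: N t => // N IH [l].
case/lastP: l => [//|l c]; rewrite edges_rcons => ltN _.
have IHc : 0 < edges c -> exists2 w, lukas 1 w & decode w = [:: c] by apply: IH; lia.
case: l ltN => [|d l] ltN.
- case: c IHc {ltN} => [[|e m]] IHc; first by exists [:: 0].
  by have [w lw dw] := IHc isT; exists (1 :: w); rewrite /= ?dw.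
- have [w lw dw] : exists2 w, lukas 1 w & decode w = [:: Node (d :: l)].
    by apply: IH; [lia | rewrite /= addSn].
  case: c IHc {ltN} => [[|e m]] IHc; first by exists (2 :: w); rewrite /= ?dw.
  have [w' lw' dw'] := IHc isT.
  exists (3 :: w ++ w'); first by rewrite /= (lukas_cat 1 (m := 1)).
  by rewrite /= (decode_cat _ lw) dw dw'.
Qed.

Definition tree_of (w : seq nat) : ptree := head leaf (decode w).

Lemma decode_tree_of w : lukas 1 w -> decode w = [:: tree_of w].
Proof. by move/size_decode; rewrite /tree_of; case: (decode w) => [|t []]. Qed.

Lemma tree_of_stats w : lukas 1 w ->
  [/\ edges (tree_of w) = size w, old_leaves (tree_of w) = count_mem 0 w
    & young_leaves (tree_of w) = count_mem 2 w].
Proof.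
move=> lw; have [_] := decode_stats lw; rewrite (decode_tree_of lw) /=.
by rewrite !addn0.
Qed.

Lemma letter_counts w : all (fun a => a < 4) w ->
  size w = count_mem 0 w + count_mem 1 w + count_mem 2 w + count_mem 3 w /\
  sumn (map arity w) = count_mem 1 w + count_mem 2 w + 2 * count_mem 3 w.
Proof.
elim: w => [|a w IH] //= /andP[a4 /IH].
by case: a a4 => [|[|[|[|//]]]] _ /= [-> ->]; split; lia.
Qed.

(** * The cycle lemma *)

Definition lukasiewicz (k : nat) (u : seq nat) : Prop :=
  (forall m, m < size u -> m < k + sumn (take m u)) /\ k + sumn u = size u.

Lemma lukasP k w : all (fun a => a < 4) w -> lukas k w <-> lukasiewicz k (map arity w).
Proof.
rewrite /lukasiewicz size_map; elim: w k => [|a w IH] k /=.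
  by move=> _; split=> [/eqP -> | [_ /eqP]]; rewrite ?addn0.
case/andP=> -> w4 /=; split.
- case/andP=> k_gt0 /(IH _ w4)[pre sum]; split=> [[|m] /= lt_m|]; try lia.
  by have := pre m lt_m; lia.
- case=> pre sum; have k_gt0 : 0 < k by have := pre 0 isT; rewrite addn0.
  rewrite k_gt0; apply/IH => //; split=> [m lt_m|]; last by lia.
  by have := pre m.+1 lt_m; rewrite /=; lia.
Qed.

Lemma lukas1_count0 w : lukas 1 w -> count_mem 0 w = (count_mem 3 w).+1.
Proof.
move=> lw; have w4 := lukas_letters lw.
have [_ arity_w] := (lukasP 1 w4).1 lw; rewrite size_map in arity_w.
by have [size_w sum_w] := letter_counts w4; lia.
Qed.

Section CycleLemma.

Variable v : seq nat.
Local Notation N := (size v).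
Local Notation A m := (sumn (take m v)).

Lemma sumn_take_rot r m : r <= N -> m <= N ->
  sumn (take m (rot r v)) + A r =
  if m <= N - r then A (r + m) else A N + A (m - (N - r)).
Proof.
move=> le_rN le_mN; rewrite /rot take_cat size_drop.
have AN : A N = sumn (drop r v) + A r.
  by rewrite take_size -{1}(cat_take_drop r v) sumn_cat addnC.
case: ltnP => [lt_m|le_m].
  by rewrite ifT ?takeD ?sumn_cat 1?addnC //; lia.
case: leqP => [ge_m|lt_m].
  have -> : m = N - r by lia.
  by rewrite subnn take0 cats0 subnKC // AN.
by rewrite sumn_cat take_takel ?AN; lia.
Qed.

(* [r] is the first index where [m |-> A m - m] is minimal (written without
   truncated subtraction). *)
Definition first_min (r : nat) : Prop :=
  (forall k, r <= k < N -> A r + k <= A k + r) /\ (forall k, k < r -> A r + k < A k + r).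

Hypothesis sum_v : 1 + sumn v = N.

Lemma lukasiewicz_rot r : r < N -> lukasiewicz 1 (rot r v) <-> first_min r.
Proof.
move=> lt_rN; have le_rN := ltnW lt_rN; have AN : A N = sumn v by rewrite take_size.
rewrite /lukasiewicz size_rot sumn_rot sum_v; split=> [[pre _] | [ge_r lt_r]]; last first.
  split=> // m lt_mN; have := sumn_take_rot le_rN (ltnW lt_mN).
  case: ifP => le_m; last by have := lt_r (m - (N - r)); lia.
  case: (ltnP (r + m) N) => [lt_rm | ge_rm]; first by have := ge_r (r + m); lia.
  by have := lt_r 0; rewrite take0 /= (_ : r + m = N) ?AN; lia.
split=> [k /andP[le_rk lt_kN] | k lt_kr].
  have lt_N : k - r < N by lia.
  have := pre _ lt_N; have := sumn_take_rot le_rN (ltnW lt_N).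
  by rewrite ifT ?subnKC //; lia.
have lt_N : N - r + k < N by lia.
have := pre _ lt_N; have := sumn_take_rot le_rN (ltnW lt_N).
case: ifP => [le | _]; last by rewrite (_ : N - r + k - (N - r) = k); lia.
have k0 : k = 0 by lia.
by rewrite k0 addn0 subnKC // AN take0 /=; lia.
Qed.

Lemma first_min_inj r1 r2 : r1 < N -> r2 < N -> first_min r1 -> first_min r2 -> r1 = r2.
Proof.
move=> lt_r1 lt_r2 [ge1 lt1] [ge2 lt2].
case: (ltngtP r1 r2) => // [lt_12 | lt_21].
  by have := ge1 r2; have := lt2 r1 lt_12; rewrite lt_r2 (ltnW lt_12); lia.
by have := ge2 r1; have := lt1 r2 lt_21; rewrite lt_r1 (ltnW lt_21); lia.
Qed.

Lemma first_min_exists : 0 < N -> exists2 r, r < N & first_min r.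
Proof.
move=> N_gt0; pose F (i : 'I_N) := A i + N - i.
have [m _ min_m] := arg_minnP F (P := predT) (i0 := Ordinal N_gt0) isT.
have ex_min : exists r, (r < N) && [forall k : 'I_N, A r + k <= A k + r].
  exists m; rewrite ltn_ord; apply/forallP => k.
  by have := min_m k isT; rewrite /F; have := ltn_ord m; have := ltn_ord k; lia.
case: (ex_minnP ex_min) => r /andP[lt_rN /forallP min_r] first_r.
exists r => //; split=> [k /andP[_ lt_kN] | k lt_kr]; first exact: (min_r (Ordinal lt_kN)).
rewrite ltnNge; apply/negP => le_k; suff : r <= k by lia.
apply: first_r; rewrite (ltn_trans lt_kr lt_rN); apply/forallP => i.
by have := min_r i; lia.
Qed.

Lemma cycle_lemma :
  exists2 r, r < N & forall r', r' < N -> lukasiewicz 1 (rot r' v) <-> r' = r.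
Proof.
have [|r lt_rN min_r] := first_min_exists; first by rewrite -sum_v.
exists r => // r' lt_r'N; rewrite lukasiewicz_rot //.
by split=> [min_r' | ->] //; apply: first_min_inj.
Qed.

End CycleLemma.

Lemma sum_lukas_rot w : all (fun a => a < 4) w -> 1 + sumn (map arity w) = size w ->
  \sum_(r < size w) lukas 1 (rot r w) = 1.
Proof.
move=> w4 sum_w.
have sum_v : 1 + sumn (map arity w) = size (map arity w) by rewrite size_map.
have [r0] := cycle_lemma sum_v; rewrite size_map => lt_r0 rotP.
have lukas_rot (r : 'I_(size w)) : lukas 1 (rot r w) = (r == Ordinal lt_r0).
  have rot4 : all (fun a => a < 4) (rot r w).
    by rewrite (perm_all _ (_ : perm_eq _ w)) ?perm_rot.
  have E : lukas 1 (rot r w) <-> val r = r0 by rewrite lukasP // map_rot rotP.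
  by apply/idP/eqP => [/E r_r0 | r_r0]; [apply: val_inj | apply/E; rewrite r_r0].
rewrite (eq_bigr (fun r => (r == Ordinal lt_r0) : nat)) => [|r _]; last exact/congr1/lukas_rot.
by rewrite (bigD1 (Ordinal lt_r0)) //= eqxx big1 // => r /negbTE ->.
Qed.

(** * Multinomial coefficients *)

Section Multinomial.

Variable T : finType.

Lemma sum_tupleS n (F : n.+1.-tuple T -> nat) :
  \sum_(w : n.+1.-tuple T) F w = \sum_(a : T) \sum_(w : n.-tuple T) F (cons_tuple a w).
Proof.
rewrite pair_big /= (reindex (fun p : T * n.-tuple T => cons_tuple p.1 p.2)) //=.
exists (fun w : n.+1.-tuple T => (thead w, behead_tuple w)) => [[a w] _ | w _] /=.
  by rewrite theadE; congr pair; apply: val_inj.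
by rewrite [w in RHS]tuple_eta; apply: val_inj.
Qed.

Definition count_tuples n (c : T -> nat) : nat :=
  \sum_(w : n.-tuple T) [forall a, count_mem a w == c a].

Definition remove_one (c : T -> nat) (a : T) (b : T) : nat := c b - (b == a).

Lemma prod_fact_remove_one c a : 0 < c a ->
  \prod_b (c b)`! = c a * \prod_b (remove_one c a b)`!.
Proof.
move=> c_gt0; rewrite (bigD1 a) // [in RHS](bigD1 a) //= /remove_one eqxx.
rewrite mulnA -(prednK c_gt0) factS subn1 /=; congr (_ * _ * _).
by apply: eq_bigr => b /negbTE ->; rewrite subn0.
Qed.

Lemma sum_remove_one c a : 0 < c a -> \sum_b remove_one c a b = (\sum_b c b).-1.
Proof.
move=> c_gt0; rewrite (bigD1 a) // [in RHS](bigD1 a) //= /remove_one eqxx.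
rewrite (eq_bigr c) => [|b /negbTE ->]; last by rewrite subn0.
lia.
Qed.

Lemma count_tuplesS n c :
  count_tuples n.+1 c = \sum_a (0 < c a) * count_tuples n (remove_one c a).
Proof.
rewrite /count_tuples sum_tupleS; apply: eq_bigr => a _.
rewrite big_distrr /=; apply: eq_bigr => w _; rewrite mulnb; congr nat_of_bool.
apply/forallP/andP => [cnt_aw | [c_gt0 /forallP cnt_w] b].
  split; first by have := cnt_aw a; rewrite /= eqxx => /eqP <-.
  apply/forallP => b; move/eqP: (cnt_aw b); rewrite /remove_one /= eq_sym.
  by move=> cnt_b; apply/eqP; lia.
move/eqP: (cnt_w b); rewrite /remove_one /= eq_sym => cnt_b; apply/eqP.
by case: eqP cnt_b => [<- | _]; lia.
Qed.

Lemma count_tuples_fact n c :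
  count_tuples n c * \prod_a (c a)`! = (\sum_a c a == n) * n`!.
Proof.
elim: n c => [|n IH] c.
  rewrite /count_tuples (big_pred1 [tuple]) => [|w]; last by apply/esym/eqP; exact: tuple0.
  have -> : [forall a, count_mem a [tuple] == c a] = (\sum_a c a == 0).
    by rewrite sum_nat_eq0; apply: eq_forallb => a; rewrite eq_sym.
  case: eqP => [/eqP | _] //; rewrite sum_nat_eq0 => /forallP c0.
  by rewrite big1 // => a _; rewrite (eqP (c0 a)).
rewrite count_tuplesS big_distrl /=.
rewrite (eq_bigr (fun a => c a * (((\sum_b c b).-1 == n) * n`!))) => [|a _]; last first.
  case: (posnP (c a)) => [-> // | c_gt0].
  by rewrite mul1n (prod_fact_remove_one c_gt0) mulnCA IH sum_remove_one.
rewrite -big_distrl /= factS; case: (\sum_a c a) => [|m] //=.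
by rewrite eqSS; case: eqP => [-> | _]; rewrite ?eqxx ?mul1n ?mul0n ?muln0.
Qed.

End Multinomial.

Lemma sum_bool_card (T : finType) (A : pred T) : \sum_(x : T) A x = #|A|.
Proof.
rewrite -sum1_card [RHS]big_mkcond /=.
by apply: eq_bigr => x _; rewrite unfold_in; case: (A x).
Qed.

Lemma binomials_fact a b c n : a + b + c <= n ->
  'C(n, a) * 'C(n - a, b) * 'C(n - a - b, c) * (a`! * b`! * c`! * (n - a - b - c)`!) = n`!.
Proof.
move=> le_n; have le_a : a <= n by lia.
have le_b : b <= n - a by lia.
have le_c : c <= n - a - b by lia.
by rewrite -(bin_fact le_a) -(bin_fact le_b) -(bin_fact le_c); lia.
Qed.

Lemma count_tuples_binomials n a b c :
  count_tuples n (fun x : 'I_4 => nth 0 [:: a; n - a - b - c; b; c] x) =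
  'C(n, a) * 'C(n - a, b) * 'C(n - a - b, c).
Proof.
have := count_tuples_fact n (fun x : 'I_4 => nth 0 [:: a; n - a - b - c; b; c] x).
rewrite !big_ord_recl !big_ord0 /= muln1 addn0.
set cnt := count_tuples _ _; have facts_gt0 : 0 < a`! * b`! * c`! * (n - a - b - c)`!.
  by rewrite !muln_gt0 !fact_gt0.
case: (leqP (a + b + c) n) => [le_n | gt_n].
  rewrite (_ : _ == n) ?mul1n => [cnt_fact|]; last by apply/eqP; lia.
  apply/eqP; rewrite -(eqn_pmul2r facts_gt0) binomials_fact // -cnt_fact; apply/eqP; lia.
rewrite (_ : _ == n = false) ?mul0n => [/eqP|]; last by apply/negbTE/eqP; lia.
rewrite muln_eq0 => /orP[/eqP -> | /eqP facts0]; last by move: facts_gt0; lia.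
case: (ltnP n a) => [lt_a | le_a]; first by rewrite bin_small.
case: (ltnP (n - a) b) => [lt_b | le_b]; first by rewrite (bin_small lt_b) muln0.
by rewrite (@bin_small (n - a - b) c) ?muln0 //; lia.
Qed.

(** * Counting the codes *)

Definition word n (w : n.-tuple 'I_4) : seq nat := map val w.

Lemma size_word n (w : n.-tuple 'I_4) : size (word w) = n.
Proof. by rewrite size_map size_tuple. Qed.

Lemma word_letters n (w : n.-tuple 'I_4) : all (fun a => a < 4) (word w).
Proof. by apply/allP => _ /mapP[x _ ->]; apply: ltn_ord. Qed.

Lemma count_mem_word n (w : n.-tuple 'I_4) (x : 'I_4) :
  count_mem (val x) (word w) = count_mem x w.
Proof. by rewrite count_map. Qed.

Lemma word_onto n (w : seq nat) : size w = n -> all (fun a => a < 4) w ->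
  exists x : n.-tuple 'I_4, word x = w.
Proof.
move=> <- w4; exists (Tuple (introT eqP (size_map (@inord 3) w))).
by rewrite /word /= -map_comp map_id_in // => a /(allP w4) a4; apply: inordK.
Qed.

Lemma count_lukas_rot n (P : pred (n.-tuple 'I_4)) :
  (forall r w, P (rot_tuple r w) = P w) ->
  (forall w, P w -> 1 + sumn (map arity (word w)) = n) ->
  n * \sum_w (P w && lukas 1 (word w)) = \sum_w P w.
Proof.
move=> P_rot P_arity.
transitivity (\sum_w \sum_(r < n) (P w && lukas 1 (rot r (word w)))); last first.
  apply: eq_bigr => w _; case Pw: (P w); last by rewrite big1.
  by have := sum_lukas_rot (word_letters w); rewrite size_word => -> //; apply: P_arity.
rewrite exchange_big /= [RHS](eq_bigr (fun=> \sum_w (P w && lukas 1 (word w)))) => [|r _].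
  by rewrite sum_nat_const card_ord.
have rot_inj : injective (@rot_tuple n r 'I_4) by move=> x y /(congr1 val)/rot_inj/val_inj.
rewrite [RHS](reindex_inj rot_inj) /=.
by apply: eq_bigr => w _; rewrite P_rot /word map_rot.
Qed.

(* Multiplicities of the letters 0, 1, 2, 3 in the code of a tree with [n] edges,
   [i] old and [j] young leaves. *)
Definition code_counts n i j (x : 'I_4) : nat :=
  nth 0 [:: i; n - i - j - (i - 1); j; i - 1] x.

Definition codes n i j : seq (n.-tuple 'I_4) :=
  enum [pred w : n.-tuple 'I_4 |
        [forall x, count_mem x w == code_counts n i j x] && lukas 1 (word w)].

Lemma code_countsP n i j (w : n.-tuple 'I_4) :
  [forall x, count_mem x w == code_counts n i j x] =
  [&& count_mem 0 (word w) == i, count_mem 2 (word w) == j & count_mem 3 (word w) == i - 1].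
Proof.
have [size_w _] := letter_counts (word_letters w); rewrite size_word in size_w.
apply/forallP/and3P => [cnt_w | [c0 c2 c3] x].
  by split; [move: (cnt_w ord0) | move: (cnt_w (@Ordinal 4 2 isT)) | move: (cnt_w ord_max)];
    rewrite -count_mem_word.
have c1 : count_mem 1 (word w) == n - i - j - (i - 1) by lia.
by rewrite -count_mem_word /code_counts; case: x => [[|[|[|[|//]]]] ?].
Qed.

Lemma mem_codes n i j (w : n.-tuple 'I_4) :
  (w \in codes n i j) =
  [&& lukas 1 (word w), count_mem 0 (word w) == i & count_mem 2 (word w) == j].
Proof.
rewrite mem_enum inE code_countsP andbC; case lw: (lukas 1 (word w)) => //=.
have count0 := lukas1_count0 lw.
by case: eqP => [<-|] //=; rewrite count0 subn1 eqxx andbT.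
Qed.

Lemma size_codes n i j : 0 < i ->
  n * size (codes n i j) = 'C(n, i) * 'C(n - i, j) * 'C(n - i - j, i - 1).
Proof.
move=> i_gt0; rewrite -cardE -sum_bool_card count_lukas_rot => [|r w | w].
- exact: count_tuples_binomials.
- have /permP rotE : perm_eq (rot_tuple r w) w by rewrite perm_rot.
  by apply: eq_forallb => x; rewrite rotE.
- have [size_w sum_w] := letter_counts (word_letters w); rewrite size_word in size_w.
  by rewrite code_countsP => /and3P[c0 c2 c3]; lia.
Qed.

Lemma In_mem (T : eqType) (x : T) (s : seq T) : List.In x s <-> x \in s.
Proof.
elim: s => [|y s IH] //=; rewrite in_cons.
by split=> [[->|/IH->] | /orP[/eqP->|/IH]]; rewrite ?eqxx ?orbT; auto.
Qed.

Lemma NoDup_map_uniq (T : eqType) (U : Type) (f : T -> U) (s : seq T) :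
  uniq s -> {in s &, injective f} -> List.NoDup (map f s).
Proof.
elim: s => [|x s IH] /=; first by constructor.
case/andP=> x_s s_uniq f_inj; constructor.
  case/List.in_map_iff=> y [fy /In_mem y_s]; move: x_s.
  by rewrite -(f_inj y x) ?y_s // inE ?eqxx ?y_s ?orbT.
by apply: IH => // y z y_s z_s; apply: f_inj; rewrite inE ?y_s ?z_s orbT.
Qed.

Lemma NoDup_code_trees n i j : List.NoDup [seq tree_of (word w) | w <- codes n i j].
Proof.
apply: NoDup_map_uniq (enum_uniq _) _ => w1 w2.
rewrite !mem_codes => /andP[l1 _] /andP[l2 _] E.
apply/val_inj/(inj_map val_inj)/(decode_inj l1 l2).
by rewrite (decode_tree_of l1) (decode_tree_of l2) E.
Qed.

Lemma mem_code_trees n i j t : 0 < n ->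
  List.In t [seq tree_of (word w) | w <- codes n i j] <->
  (edges t = n /\ old_leaves t = i /\ young_leaves t = j).
Proof.
move=> n_gt0; rewrite List.in_map_iff; split=> [[w [<- /In_mem]] | [et [ot yt]]].
  rewrite mem_codes => /and3P[lw /eqP c0 /eqP c2].
  by have [-> -> ->] := tree_of_stats lw; rewrite size_word c0 c2.
have t_gt0 : 0 < edges t by rewrite et.
have [w lw dw] := decode_surj t_gt0.
have tw : tree_of w = t by have := decode_tree_of lw; rewrite dw => -[].
have [ew ow yw] := tree_of_stats lw; rewrite tw in ew ow yw.
have [x wx] := word_onto (etrans (esym ew) et) (lukas_letters lw).
exists x; split; first by rewrite wx.
by apply/In_mem; rewrite mem_codes wx lw -ow -yw ot yt !eqxx.
Qed.

Theorem mainTheorem2 (n i j : nat) (hn : 1 <= n) (hi : 1 <= i) :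
  exists s : seq ptree,
    List.NoDup s /\
    (forall t : ptree,
        List.In t s <->
        (edges t = n /\ old_leaves t = i /\ young_leaves t = j)) /\
    n * size s = 'C(n, i) * 'C(n - i, j) * 'C(n - i - j, i - 1).
Proof.
exists [seq tree_of (word w) | w <- codes n i j]; split; first exact: NoDup_code_trees.
split=> [t | ]; first exact: mem_code_trees.
by rewrite size_map size_codes.
Qed.
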